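(* For any $d\in\mathbb{Z}_{\ge0}$ and $\varepsilon\in(0,1/2)$, there are $\rho_0,\dots,\rho_d\in[0,1-\varepsilon]$ and $c_0,\dots,c_d\in\mathbb{R}$ such that: (1) $\sum_{j=0}^dc_j\rho_j^k=1$ for $k=0,1,\dots,d$; (2) $0\le\sum_{j=0}^dc_j\rho_j^k\le1$ for all integers $k\ge d+1$; (3) $\sum_{j=0}^d|c_j|\le 2^{O(d\sqrt{\varepsilon})}$, where the implied constant is absolute. *)

From Stdlib Require Export Reals.
Open Scope R_scope.

From Stdlib Require Import Reals Lra Lia.
Open Scope R_scope.

(* Take for rho_j the extrema of the Chebyshev polynomial T_d, rescaled to
   [0, 1 - eps], and for c_j the weights of polynomial extrapolation to 1 from
   these nodes, c_j = L_j(1) for the Lagrange basis.  Property (1) is exactness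
   of extrapolation on polynomials of degree <= d.  For (2), write Phi_n for
   extrapolation from rho_0, ..., rho_n; then
   Phi_(n+1)(x^(k+1)) = rho_(n+1) Phi_(n+1)(x^k) + (1 - rho_(n+1)) Phi_n(x^k)
   is a convex combination, so every moment stays in [0, 1].  For (3), the
   weights of decreasing nodes below 1 alternate in sign, and
   T_d(2x/(1 - eps) - 1) equals (-1)^j at rho_j, so
   sum_j |c_j| = T_d(X) <= (X + sqrt(X^2 - 1))^d <= exp(8 d sqrt eps) with
   X = (1 + eps)/(1 - eps). *)

Fixpoint poly_deg_le (n : nat) (f : R -> R) : Prop :=
  match n with
  | O => forall x y, f x = f y
  | S m => forall a, exists g, poly_deg_le m g /\ forall x, f x = f a + (x - a) * g x
  end.

Lemma poly_deg_le_ext n f g :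
  poly_deg_le n f -> (forall x, f x = g x) -> poly_deg_le n g.
Proof.
  revert f g; induction n as [|n IH]; simpl; intros f g Hf Efg.
  - intros x y; rewrite <- !Efg; apply Hf.
  - intros a; destruct (Hf a) as [h [Hh Ef]]; exists h; split; [exact Hh|].
    intros x; rewrite <- !Efg; apply Ef.
Qed.

Lemma poly_deg_le_const n c : poly_deg_le n (fun _ => c).
Proof.
  revert c; induction n as [|n IH]; simpl; intros c; [reflexivity|].
  intros a; exists (fun _ => 0); split; [apply IH | intros; ring].
Qed.

Lemma poly_deg_le_lin n f g l m :
  poly_deg_le n f -> poly_deg_le n g -> poly_deg_le n (fun x => l * f x + m * g x).
Proof.
  revert f g; induction n as [|n IH]; simpl; intros f g Hf Hg.
  - intros x y; rewrite (Hf x y), (Hg x y); reflexivity.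
  - intros a; destruct (Hf a) as [f1 [Hf1 Ef]], (Hg a) as [g1 [Hg1 Eg]].
    exists (fun x => l * f1 x + m * g1 x); split; [now apply IH|].
    intros x; rewrite (Ef x), (Eg x); ring.
Qed.

Lemma poly_deg_le_S n f : poly_deg_le n f -> poly_deg_le (S n) f.
Proof.
  revert f; induction n as [|n IH]; intros f Hf.
  - intros a; exists (fun _ => 0); split; [apply poly_deg_le_const|].
    intros x; simpl in Hf; rewrite (Hf x a); ring.
  - intros a; destruct (Hf a) as [g [Hg Ef]]; exists g; split; [now apply IH | exact Ef].
Qed.

Lemma poly_deg_le_mul_affine n f al be :
  poly_deg_le n f -> poly_deg_le (S n) (fun x => (al * x + be) * f x).
Proof.
  revert f; induction n as [|n IH]; intros f Hf a.
  - exists (fun _ => al * f a); split; [apply poly_deg_le_const|].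
    intros x; simpl in Hf; rewrite (Hf x a); ring.
  - destruct (Hf a) as [g [Hg Ef]].
    exists (fun x => 1 * (al * f a) + 1 * ((al * x + be) * g x)); split.
    + apply poly_deg_le_lin; [apply poly_deg_le_const | now apply IH].
    + intros x; rewrite (Ef x); ring.
Qed.

Lemma poly_deg_le_pow k n : (k <= n)%nat -> poly_deg_le n (fun x => x ^ k).
Proof.
  induction 1 as [|n _ IH]; [|now apply poly_deg_le_S].
  induction k as [|k IH]; [exact (poly_deg_le_const 0 1)|].
  apply poly_deg_le_ext with (fun x => (1 * x + 0) * x ^ k);
    [now apply poly_deg_le_mul_affine | intros; simpl; ring].
Qed.

Section Extrapolation.

Variable rho : nat -> R.

(* [weight n j] is the value at 1 of the [j]-th Lagrange basis polynomial of the
   nodes [rho 0, ..., rho n]: adding the node [rho (S m)] multiplies the old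
   values by [(1 - rho (S m)) / (rho j - rho (S m))], and the values sum to 1. *)
Fixpoint weight (n j : nat) : R :=
  match n with
  | O => 1
  | S m =>
      if Nat.leb j m then weight m j * (1 - rho (S m)) / (rho j - rho (S m))
      else 1 - sum_f_R0 (fun i => weight m i * (1 - rho (S m)) / (rho i - rho (S m))) m
  end.

Definition extrap (n : nat) (f : R -> R) : R :=
  sum_f_R0 (fun j => weight n j * f (rho j)) n.

Lemma weight_S_old m j : (j <= m)%nat ->
  weight (S m) j = weight m j * (1 - rho (S m)) / (rho j - rho (S m)).
Proof. intros Hj; cbn -[Nat.leb]; now rewrite (proj2 (Nat.leb_le j m) Hj). Qed.

Lemma weight_S_last m :
  weight (S m) (S m)
  = 1 - sum_f_R0 (fun i => weight m i * (1 - rho (S m)) / (rho i - rho (S m))) m.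
Proof.
  cbn -[Nat.leb]; now rewrite (proj2 (Nat.leb_gt (S m) m) (Nat.lt_succ_diag_r m)).
Qed.

Lemma extrap_S n f :
  extrap (S n) f = sum_f_R0 (fun j => weight (S n) j * f (rho j)) n
                   + weight (S n) (S n) * f (rho (S n)).
Proof. reflexivity. Qed.

Lemma extrap_ext n f g : (forall x, f x = g x) -> extrap n f = extrap n g.
Proof. intros Efg; unfold extrap; apply sum_eq; intros; now rewrite Efg. Qed.

Lemma extrap_lin n f g l m :
  extrap n (fun x => l * f x + m * g x) = l * extrap n f + m * extrap n g.
Proof.
  unfold extrap; rewrite !scal_sum, <- sum_plus.
  apply sum_eq; intros; ring.
Qed.

Lemma extrap_one n : extrap n (fun _ => 1) = 1.
Proof.
  destruct n as [|n]; [unfold extrap; simpl; ring|].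
  rewrite extrap_S, weight_S_last.
  rewrite (sum_eq _ (fun i => weight n i * (1 - rho (S n)) / (rho i - rho (S n))));
    [ring|].
  intros i Hi; rewrite weight_S_old by exact Hi; ring.
Qed.

Lemma extrap_shift m g :
  (forall j, (j <= m)%nat -> rho j <> rho (S m)) ->
  extrap (S m) (fun x => (x - rho (S m)) * g x) = (1 - rho (S m)) * extrap m g.
Proof.
  intros Hd; rewrite extrap_S, Rminus_diag, Rmult_0_l, Rmult_0_r, Rplus_0_r.
  unfold extrap; rewrite scal_sum; apply sum_eq; intros j Hj.
  rewrite weight_S_old by exact Hj.
  field; apply Rminus_eq_contra, Hd, Hj.
Qed.

Lemma extrap_exact n f :
  (forall i j, (i < j <= n)%nat -> rho i <> rho j) ->
  poly_deg_le n f -> extrap n f = f 1.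
Proof.
  revert f; induction n as [|n IH]; intros f Hd Hf.
  - unfold extrap; simpl; simpl in Hf; rewrite (Hf 1 (rho 0)); ring.
  - destruct (Hf (rho (S n))) as [g [Hg Ef]].
    rewrite (extrap_ext _ _ (fun x => f (rho (S n)) * 1 + 1 * ((x - rho (S n)) * g x)))
      by (intros; rewrite Ef; ring).
    rewrite extrap_lin, extrap_one, extrap_shift, IH, (Ef 1); [ring | | exact Hg |];
      intros; apply Hd; lia.
Qed.

Lemma extrap_pow_bounds n :
  (forall i j, (i < j <= n)%nat -> rho i <> rho j) ->
  (forall j, (j <= n)%nat -> 0 <= rho j <= 1) ->
  forall k, 0 <= extrap n (fun x => x ^ k) <= 1.
Proof.
  induction n as [|n IHn]; intros Hd Hr k.
  - unfold extrap; simpl; rewrite Rmult_1_l.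
    destruct (Hr 0%nat (le_n 0)) as [H0 H1].
    split; [now apply pow_le | rewrite <- (pow1 k); now apply pow_incr].
  - assert (IH : forall k, 0 <= extrap n (fun x => x ^ k) <= 1)
      by (apply IHn; intros; [apply Hd | apply Hr]; lia).
    destruct (Hr (S n) (le_n _)) as [H0 H1].
    induction k as [|k IHk]; [rewrite extrap_one; lra|].
    rewrite (extrap_ext _ _ (fun x => rho (S n) * x ^ k + 1 * ((x - rho (S n)) * x ^ k)))
      by (intros; simpl; ring).
    rewrite extrap_lin, extrap_shift by (intros; apply Hd; lia).
    specialize (IH k); nra.
Qed.

Fixpoint node_poly (m : nat) (x : R) : R :=
  match m with
  | O => x - rho 0
  | S p => node_poly p x * (x - rho (S p))
  end.

Lemma poly_deg_le_node_poly m : poly_deg_le (S m) (node_poly m).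
Proof.
  induction m as [|m IH].
  - apply poly_deg_le_ext with (fun x => (1 * x + - rho 0) * 1);
      [apply poly_deg_le_mul_affine, poly_deg_le_const | intros; simpl; ring].
  - apply poly_deg_le_ext with (fun x => (1 * x + - rho (S m)) * node_poly m x);
      [now apply poly_deg_le_mul_affine | intros; simpl; ring].
Qed.

Lemma node_poly_root m j : (j <= m)%nat -> node_poly m (rho j) = 0.
Proof.
  induction m as [|m IH]; intros Hj; simpl.
  - replace j with 0%nat by lia; ring.
  - destruct (Nat.eq_dec j (S m)) as [->|Hne]; [ring|].
    rewrite IH by lia; ring.
Qed.

Lemma node_poly_sign_below m x :
  (forall i, (i <= m)%nat -> x < rho i) -> 0 < (-1) ^ (S m) * node_poly m x.
Proof.
  induction m as [|m IH]; intros Hx; simpl.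
  - specialize (Hx 0%nat (le_n _)); lra.
  - assert (Hm := IH (fun i Hi => Hx i (le_S _ _ Hi))); simpl in Hm.
    specialize (Hx (S m) (le_n _)).
    replace (-1 * (-1 * (-1) ^ m) * (node_poly m x * (x - rho (S m))))
      with ((-1 * (-1) ^ m * node_poly m x) * (rho (S m) - x)) by ring.
    apply Rmult_lt_0_compat; lra.
Qed.

Lemma node_poly_pos_above m x :
  (forall i, (i <= m)%nat -> rho i < x) -> 0 < node_poly m x.
Proof.
  induction m as [|m IH]; intros Hx; simpl.
  - specialize (Hx 0%nat (le_n _)); lra.
  - apply Rmult_lt_0_compat; [apply IH; auto | specialize (Hx (S m) (le_n _)); lra].
Qed.

Lemma weight_last_mul_node_poly n :
  (forall i j, (i < j <= S n)%nat -> rho i <> rho j) ->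
  weight (S n) (S n) * node_poly n (rho (S n)) = node_poly n 1.
Proof.
  intros Hd.
  rewrite <- (extrap_exact (S n) (node_poly n) Hd (poly_deg_le_node_poly n)), extrap_S.
  rewrite sum_eq_R0; [ring|].
  intros i Hi; rewrite node_poly_root by exact Hi; ring.
Qed.

Lemma weight_alternating n :
  (forall i j, (i < j <= n)%nat -> rho j < rho i) ->
  (forall j, (j <= n)%nat -> rho j < 1) ->
  forall j, (j <= n)%nat -> 0 <= (-1) ^ j * weight n j.
Proof.
  induction n as [|n IH]; intros Hdec Hlt j Hj.
  - replace j with 0%nat by lia; simpl; lra.
  - destruct (Nat.eq_dec j (S n)) as [->|Hne].
    + assert (Hlast := weight_last_mul_node_poly n
                         (fun i j Hij => Rgt_not_eq _ _ (Hdec i j Hij))).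
      assert (H1 := node_poly_pos_above n 1 (fun i Hi => Hlt i (le_S _ _ Hi))).
      assert (Hs := node_poly_sign_below n (rho (S n))
                      (fun i Hi => Hdec i (S n) (conj (le_n_S _ _ Hi) (le_n _)))).
      assert (Hsq : (-1) ^ (S n) * (-1) ^ (S n) = 1)
        by (rewrite <- Rpow_mult_distr; replace (-1 * -1) with 1 by ring; apply pow1).
      set (s := (-1) ^ (S n)) in *.
      assert (Hprod :
        (s * weight (S n) (S n)) * (s * node_poly n (rho (S n))) = node_poly n 1)
        by (rewrite <- Hlast, <- (Rmult_1_r (weight _ _ * _)), <- Hsq; ring).
      destruct (Rle_lt_dec 0 (s * weight (S n) (S n))) as [|Hneg]; [assumption|nra].
    + rewrite weight_S_old by lia.
      assert (Hj' : rho (S n) < rho j) by (apply Hdec; lia).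
      assert (H1 : rho (S n) < 1) by (apply Hlt; lia).
      replace ((-1) ^ j * (weight n j * (1 - rho (S n)) / (rho j - rho (S n))))
        with (((-1) ^ j * weight n j) * ((1 - rho (S n)) / (rho j - rho (S n))))
        by (field; lra).
      apply Rmult_le_pos; [apply IH; intros; [apply Hdec | apply Hlt | ]; lia|].
      left; apply Rdiv_lt_0_compat; lra.
Qed.

Lemma sum_abs_weight n f :
  (forall i j, (i < j <= n)%nat -> rho j < rho i) ->
  (forall j, (j <= n)%nat -> rho j < 1) ->
  poly_deg_le n f -> (forall j, (j <= n)%nat -> f (rho j) = (-1) ^ j) ->
  sum_f_R0 (fun j => Rabs (weight n j)) n = f 1.
Proof.
  intros Hdec Hlt Hf Halt.
  rewrite <- (extrap_exact n f (fun i j Hij => Rgt_not_eq _ _ (Hdec i j Hij)) Hf).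
  apply sum_eq; intros j Hj; rewrite Halt by exact Hj.
  rewrite <- (Rmult_1_l (Rabs _)), <- (pow_1_abs j), <- Rabs_mult, Rabs_pos_eq;
    [ring | now apply weight_alternating].
Qed.

End Extrapolation.

Lemma nat_ind2 (P : nat -> Prop) :
  P 0%nat -> P 1%nat -> (forall n, P n -> P (S n) -> P (S (S n))) -> forall n, P n.
Proof.
  intros H0 H1 HS n; enough (P n /\ P (S n)) by tauto.
  induction n as [|n [Hn HSn]]; split; auto.
Qed.

Fixpoint cheb (n : nat) (x : R) : R :=
  match n with
  | O => 1
  | S m => match m with O => x | S p => 2 * x * cheb m x - cheb p x end
  end.

Lemma cheb_SS n x : cheb (S (S n)) x = 2 * x * cheb (S n) x - cheb n x.
Proof. reflexivity. Qed.

Lemma poly_deg_le_cheb_affine al be n : poly_deg_le n (fun x => cheb n (al * x + be)).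
Proof.
  induction n as [| |n Hn HSn] using nat_ind2.
  - exact (poly_deg_le_const 0 1).
  - apply poly_deg_le_ext with (fun x => (al * x + be) * 1);
      [apply poly_deg_le_mul_affine, poly_deg_le_const | intros; simpl; ring].
  - apply poly_deg_le_ext with
      (fun x => 1 * ((2 * al * x + 2 * be) * cheb (S n) (al * x + be))
                + (-1) * cheb n (al * x + be)).
    + apply poly_deg_le_lin;
        [now apply poly_deg_le_mul_affine | now apply poly_deg_le_S, poly_deg_le_S].
    + intros; rewrite cheb_SS; ring.
Qed.

Lemma cheb_cos n t : cheb n (cos t) = cos (INR n * t).
Proof.
  induction n as [| |n Hn HSn] using nat_ind2.
  - simpl; now rewrite Rmult_0_l, cos_0.
  - simpl; now rewrite Rmult_1_l.
  - rewrite cheb_SS, Hn, HSn.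
    replace (INR (S (S n)) * t) with (INR (S n) * t + t) by (rewrite !S_INR; ring).
    replace (INR n * t) with (INR (S n) * t - t) by (rewrite !S_INR; ring).
    rewrite cos_plus, cos_minus; ring.
Qed.

Lemma cos_INR_mul_PI j : cos (INR j * PI) = (-1) ^ j.
Proof.
  induction j as [|j IH]; [simpl; now rewrite Rmult_0_l, cos_0|].
  rewrite S_INR, Rmult_plus_distr_r, Rmult_1_l, neg_cos, IH; simpl; ring.
Qed.

Lemma cheb_closed_form X q n :
  q * q = X * X - 1 -> cheb n X = ((X + q) ^ n + (X - q) ^ n) / 2.
Proof.
  intros Hq; induction n as [| |n Hn HSn] using nat_ind2; [simpl; field | simpl; field |].
  rewrite cheb_SS, Hn, HSn; simpl.
  apply Rminus_diag_uniq.
  transitivity (((X + q) ^ n + (X - q) ^ n) * (X * X - 1 - q * q) / 2); [field|].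
  rewrite Hq; field.
Qed.

Lemma cheb_le_pow X n : 1 <= X -> cheb n X <= (X + sqrt (X * X - 1)) ^ n.
Proof.
  intros HX; set (q := sqrt (X * X - 1)).
  assert (Hq : q * q = X * X - 1) by (apply sqrt_sqrt; nra).
  assert (Hq0 : 0 <= q) by apply sqrt_pos.
  rewrite (cheb_closed_form X q n Hq).
  assert ((X - q) ^ n <= 1) by (rewrite <- (pow1 n); apply pow_incr; nra).
  assert (1 <= (X + q) ^ n) by (rewrite <- (pow1 n); apply pow_incr; lra).
  lra.
Qed.

Lemma pow_le_exp r a n : 0 <= r <= 1 + a -> r ^ n <= exp (INR n * a).
Proof.
  intros Hr; induction n as [|n IH]; [simpl; rewrite Rmult_0_l, exp_0; lra|].
  rewrite S_INR, Rmult_plus_distr_r, Rmult_1_l, exp_plus; simpl.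
  rewrite Rmult_comm; apply Rmult_le_compat; [now apply pow_le | lra | exact IH |].
  pose proof (exp_ineq1_le a); lra.
Qed.

Lemma cheb_growth d eps :
  0 < eps < 1/2 -> cheb d ((1 + eps) / (1 - eps)) <= exp (INR d * (8 * sqrt eps)).
Proof.
  intros Heps; set (X := (1 + eps) / (1 - eps)).
  assert (HX : X * (1 - eps) = 1 + eps) by (unfold X; field; lra).
  assert (HX1 : 1 <= X) by nra.
  assert (HXm : X - 1 <= 4 * eps) by nra.
  assert (HXp : X + 1 <= 4) by nra.
  assert (Hs0 := sqrt_pos eps).
  assert (Hss := sqrt_sqrt eps (Rlt_le _ _ (proj1 Heps))).
  assert (Hes : eps <= sqrt eps) by nra.
  assert (Hsq : sqrt (X * X - 1) <= 4 * sqrt eps).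
  { rewrite <- (sqrt_square (4 * sqrt eps)) by lra; apply sqrt_le_1_alt; nra. }
  eapply Rle_trans; [now apply cheb_le_pow|].
  apply pow_le_exp; split; [pose proof (sqrt_pos (X * X - 1)) |]; lra.
Qed.

(* The extrema [cos (j PI / d)] of [cheb d], mapped affinely from [-1, 1] onto
   [0, 1 - eps]; for [d = 0] the division by [INR 0 = 0] gives the angle 0. *)
Definition cheb_node (d : nat) (eps : R) (j : nat) : R :=
  (1 - eps) * (1 + cos (INR j * PI / INR d)) / 2.

Lemma cheb_angle_range d j : (j <= d)%nat -> 0 <= INR j * PI / INR d <= PI.
Proof.
  intros Hj; pose proof PI_RGT_0.
  destruct (Nat.eq_dec d 0) as [->|Hd].
  - replace j with 0%nat by lia; simpl; unfold Rdiv; rewrite !Rmult_0_l; lra.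
  - assert (0 < INR d) by (apply lt_0_INR; lia).
    assert (INR j <= INR d) by (now apply le_INR).
    pose proof (pos_INR j).
    unfold Rdiv; split.
    + apply Rmult_le_pos; [nra | left; now apply Rinv_0_lt_compat].
    + apply Rmult_le_reg_r with (INR d); [lra|].
      rewrite Rmult_assoc, Rinv_l by lra; nra.
Qed.

Lemma cheb_node_range d eps j : eps <= 1 -> 0 <= cheb_node d eps j <= 1 - eps.
Proof.
  intros Heps; unfold cheb_node.
  destruct (COS_bound (INR j * PI / INR d)); split; nra.
Qed.

Lemma cheb_node_decreasing d eps i j :
  eps < 1 -> (i < j <= d)%nat -> cheb_node d eps j < cheb_node d eps i.
Proof.
  intros Heps Hij; unfold cheb_node.
  assert (0 < INR d) by (apply lt_0_INR; lia).
  assert (INR i < INR j) by (apply lt_INR; lia).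
  assert (cos (INR j * PI / INR d) < cos (INR i * PI / INR d)).
  { apply cos_decreasing_1; try apply cheb_angle_range; try lia.
    apply Rmult_lt_compat_r; [now apply Rinv_0_lt_compat|].
    apply Rmult_lt_compat_r; [apply PI_RGT_0 | assumption]. }
  nra.
Qed.

Lemma cheb_at_cheb_node d eps j :
  eps < 1 -> (j <= d)%nat -> cheb d (2 / (1 - eps) * cheb_node d eps j + -1) = (-1) ^ j.
Proof.
  intros Heps Hj; unfold cheb_node.
  replace (2 / (1 - eps) * ((1 - eps) * (1 + cos (INR j * PI / INR d)) / 2) + -1)
    with (cos (INR j * PI / INR d)) by (field; lra).
  rewrite cheb_cos.
  destruct (Nat.eq_dec d 0) as [->|Hd].
  - replace j with 0%nat by lia; simpl; now rewrite Rmult_0_l, cos_0.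
  - replace (INR d * (INR j * PI / INR d)) with (INR j * PI)
      by (field; now apply not_0_INR).
    apply cos_INR_mul_PI.
Qed.

Theorem lemma4p13 :
  exists C : R, 0 < C /\
  forall (d : nat) (eps : R), 0 < eps < 1/2 ->
  exists rho c : nat -> R,
    (forall j : nat, (j <= d)%nat -> 0 <= rho j <= 1 - eps) /\
    (forall k : nat, (k <= d)%nat ->
        sum_f_R0 (fun j => c j * rho j ^ k) d = 1) /\
    (forall k : nat, (d + 1 <= k)%nat ->
        0 <= sum_f_R0 (fun j => c j * rho j ^ k) d <= 1) /\
    sum_f_R0 (fun j => Rabs (c j)) d <= Rpower 2 (C * INR d * sqrt eps).
Proof.
  pose proof ln_lt_2 as Hln2.
  exists (8 / ln 2); split; [apply Rdiv_lt_0_compat; lra|].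
  intros d eps Heps.
  set (rho := cheb_node d eps).
  assert (Hrange : forall j, (j <= d)%nat -> 0 <= rho j <= 1 - eps)
    by (intros; apply cheb_node_range; lra).
  assert (Hdec : forall i j, (i < j <= d)%nat -> rho j < rho i)
    by (intros; apply cheb_node_decreasing; lra || assumption).
  assert (Hdist : forall i j, (i < j <= d)%nat -> rho i <> rho j)
    by (intros i j Hij; exact (Rgt_not_eq _ _ (Hdec i j Hij))).
  exists rho, (weight rho d); split; [exact Hrange | split; [| split]].
  - intros k Hk; rewrite <- (pow1 k).
    exact (extrap_exact rho d (fun x => x ^ k) Hdist (poly_deg_le_pow k d Hk)).
  - intros k _; apply (extrap_pow_bounds rho d Hdist).
    intros j Hj; specialize (Hrange j Hj); lra.
  - rewrite (sum_abs_weight rho d (fun x => cheb d (2 / (1 - eps) * x + -1))).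
    + replace (2 / (1 - eps) * 1 + -1) with ((1 + eps) / (1 - eps)) by (field; lra).
      eapply Rle_trans; [now apply cheb_growth|].
      right; unfold Rpower; f_equal; field; lra.
    + exact Hdec.
    + intros j Hj; specialize (Hrange j Hj); lra.
    + apply poly_deg_le_cheb_affine.
    + intros; apply cheb_at_cheb_node; lra || assumption.
Qed.
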